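(* Let $X$ and $Y$ be Banach spaces and $u:X\to Y$ a continuous linear operator. If the adjoint $u^*:Y^*\to X^*$ is almost summing, then for every $q\geq 2$ and every $(x_i)_{i=1}^\infty\in Rad(X)$ we have $(u(x_i))_{i=1}^\infty\in\ell_q\langle Y\rangle$.
   Context: $r_i$ denote the Rademacher functions. $Rad(X)$ is the space of sequences $(x_i)\subset X$ with $\left(\int_0^1\left\|\sum_{i=1}^\infty r_i(t)x_i\right\|^2dt\right)^{1/2}<\infty$. For $1\le s\le\infty$, $\ell_s^w(X)$ is the space of sequences with $\|(x_i)\|_{w,s}:=\sup_{x^*\in B_{X^*}}\|(x^*(x_i))_i\|_s<\infty$. For $1\le q\le \infty$ with conjugate $q^*$, $\ell_q\langle Y\rangle$ is the space of sequences $(y_i)\subset Y$ such that $\sup\{\sum_i|y_i^*(y_i)|:(y_i^* )\in B_{\ell_{q^*}^w(Y^* )}\}<\infty$. An operator $v\in\mathcal L(E,F)$ is almost summing if there is $C\ge0$ with $\left(\int_0^1\left\|\sum_{i=1}^m r_i(t)v(x_i)\right\|^2dt\right)^{1/2}\le C\|(x_i)_{i=1}^m\|_{w,2}$ for all $m$ and $x_1,\dots,x_m\in E$. *)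

From HB Require Import structures.
From mathcomp Require Import all_boot all_order all_algebra.
From mathcomp Require Import all_classical all_reals all_analysis.
Set Implicit Arguments. Unset Strict Implicit. Unset Printing Implicit Defensive.
Import Order.TTheory GRing.Theory Num.Theory.
Import numFieldNormedType.Exports.
Local Open Scope classical_set_scope.
Local Open Scope ring_scope.

Definition rademacher {R : realType} (n : nat) (t : R) : R :=
  Num.sg (sin (2 ^+ n * pi * t)).

Definition is_linfun {R : realType} {E : normedModType R} (f : E -> R) :=
  forall (a : R) (x y : E), f (a *: x + y) = a * f x + f y.
Definition dual_elem {R : realType} {E : normedModType R} (f : E -> R) :=
  is_linfun f /\ continuous f.

Definition dual_norm {R : realType} {E : normedModType R} (f : E -> R) : \bar R :=
  ereal_sup [set (`|f x|)%:E | x in [set x : E | `|x| <= 1]].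

Definition bidual_ball {R : realType} {E : normedModType R}
    (phi : (E -> R) -> R) : Prop :=
  (forall (a : R) (f g : E -> R), dual_elem f -> dual_elem g ->
     phi (fun x => a * f x + g x) = a * phi f + phi g) /\
  (forall f : E -> R, dual_elem f -> ((`|phi f|)%:E <= dual_norm f)%E ).

Definition wnorm2_dual_fin {R : realType} {E : normedModType R}
    (m : nat) (fs : nat -> E -> R) : \bar R :=
  ereal_sup [set ((\sum_(i < m) (`|phi (fs i)| ^+ 2)%:E) `^ (2^-1))%E
            | phi in bidual_ball ].

Definition wnorm_dual {R : realType} {E : normedModType R}
    (s : R) (fs : nat -> E -> R) : \bar R :=
  ereal_sup [set ((\sum_(i <oo) ((`|phi (fs i)| `^ s)%:E)) `^ (s^-1))%E
            | phi in bidual_ball ].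

(* The adjoint adjoint of u, Y-dual -> X-dual, g |-> g \o u, is almost summing *)
Definition adjoint_almost_summing {R : realType}
    {X Y : normedModType R} (u : X -> Y) : Prop :=
  exists C : R, 0 <= C /\
    forall (m : nat) (ys : nat -> Y -> R),
      (forall i, (i < m)%N -> dual_elem (ys i)) ->
      ((\int[(@lebesgue_measure R)]_(t in `[0%R, 1%R])
          (dual_norm (fun x : X =>
              (\sum_(i < m) rademacher i.+1 t * ys i (u x))%R) ^+ 2))
         `^ (2^-1) <= C%:E * wnorm2_dual_fin m ys)%E.

Definition in_Rad {R : realType} {X : normedModType R} (xs : nat -> X) : Prop :=
  exists M : R, forall m : nat,
    (\int[(@lebesgue_measure R)]_(t in `[0%R, 1%R])
        ((`| \sum_(i < m) rademacher i.+1 t *: xs i | ^+ 2)%:E)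
      <= M%:E)%E.

Definition conj_exp {R : realType} (q : R) : R := q / (q - 1).

Definition in_ell_angle {R : realType} {Y : normedModType R}
    (q : R) (ys : nat -> Y) : Prop :=
  (ereal_sup [set \sum_(i <oo) ((`|g i (ys i)|)%:E)
             | g in [set g : nat -> Y -> R | (forall i, dual_elem (g i)) /\
                                   (wnorm_dual (conj_exp q) g <= 1)%E]]
   < +oo)%E.

From mathcomp Require Import all_boot all_order all_algebra.
From mathcomp Require Import all_classical all_reals all_analysis.
From mathcomp Require Import lra measurable_realfun.
Import Order.TTheory GRing.Theory Num.Theory.
Import numFieldNormedType.Exports.
Local Open Scope ring_scope.

(* Put s := q/(q-1) <= 2 and let (g_i) have weak l_s norm at most 1.  With
   y_i := sgn(g_i(u x_i)) g_i we have |phi(y_i)|^2 <= |phi(g_i)|^s <= 1 for phi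
   in the bidual ball, so (y_i)_{i<m} has weak l_2 norm at most 1.  On the
   dyadic intervals of rank m the Rademacher functions r_1, ..., r_m run through
   all 2^m sign patterns eps, and by their orthogonality
     sum_{i<m} |g_i(u x_i)| = avg_eps (sum_i eps_i u^* y_i)(sum_j eps_j x_j)
       <= avg_eps ||sum_i eps_i u^* y_i||^2 + avg_eps ||sum_j eps_j x_j||^2.
   The two averages are at most the corresponding integrals over [0, 1], hence
   at most C^2 (u^* is almost summing with constant C) and the Rad(X) bound M. *)

Section rademacher_dyadic.
Context {R : realType}.

Lemma sinDnpi (x : R) (n : nat) : sin (x + n%:R * pi) = (-1) ^+ n * sin x.
Proof.
elim: n => [|n IHn]; first by rewrite mul0r addr0 expr0 mul1r.
by rewrite -natr1 mulrDl mul1r addrA sinDpi IHn exprS mulN1r mulNr.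
Qed.

Lemma sgr_sin_mulpi (x : R) (n : nat) : n%:R < x < n.+1%:R ->
  Num.sg (sin (x * pi)) = (-1) ^+ n.
Proof.
move=> /andP[nx xn].
have -> : x * pi = (x - n%:R) * pi + n%:R * pi by rewrite mulrBl subrK.
rewrite sinDnpi sgrM sgrX sgrN1 gtr0_sg ?mulr1 //.
apply: sin_gt0_pi; rewrite mulr_gt0 ?pi_gt0 ?subr_gt0 //=.
by rewrite -[ltRHS]mul1r ltr_pM2r ?pi_gt0 // ltrBlDr addrC natr1.
Qed.

(* Open, so as to avoid the zeros of the Rademacher functions. *)
Definition open_dyadic_itv (m k : nat) : set R :=
  [set` `]k%:R / 2 ^+ m, k.+1%:R / 2 ^+ m[%R].

Definition rad_sign (m k : nat) (i : 'I_m) : R := (-1) ^+ (k %/ 2 ^ (m - i.+1)).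

Lemma rademacher_open_dyadic (m k : nat) (i : 'I_m) (t : R) :
  open_dyadic_itv m k t -> rademacher i.+1 t = rad_sign m k i.
Proof.
rewrite /open_dyadic_itv /= in_itv /= => /andP[kt tk].
have m2 : (0 : R) < 2 ^+ m by rewrite exprn_gt0.
rewrite ltr_pdivrMr // in kt; rewrite ltr_pdivlMr // in tk.
set p := (m - i.+1)%N.
have emp : m = (i.+1 + p)%N by rewrite subnKC.
have p2 : (0 : R) < 2 ^+ p by rewrite exprn_gt0.
have scale : (2 ^+ i.+1 * t) * 2 ^+ p = t * 2 ^+ m.
  by rewrite mulrAC -exprD -emp mulrC.
rewrite /rademacher /rad_sign mulrAC; apply: sgr_sin_mulpi; apply/andP; split.
- rewrite -(ltr_pM2r p2) scale; apply: le_lt_trans kt.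
  by rewrite -natrX -natrM ler_nat leq_divM.
- rewrite -(ltr_pM2r p2) scale (lt_le_trans tk) //.
  by rewrite -natrX -natrM ler_nat ltn_ceil ?expn_gt0.
Qed.

Lemma open_dyadic_itv_inj (m j k : nat) (t : R) :
  open_dyadic_itv m j t -> open_dyadic_itv m k t -> j = k.
Proof.
rewrite /open_dyadic_itv /= !in_itv /= => /andP[jt tj] /andP[kt tk].
have m2 : (0 : R) < (2 ^+ m)^-1 by rewrite invr_gt0 exprn_gt0.
have jk : (j%:R : R) < k.+1%:R by rewrite -(ltr_pM2r m2); exact: lt_trans jt tk.
have kj : (k%:R : R) < j.+1%:R by rewrite -(ltr_pM2r m2); exact: lt_trans kt tj.
by rewrite !ltr_nat !ltnS in jk kj; apply/eqP; rewrite eqn_leq jk kj.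
Qed.

Lemma open_dyadic_itv_sub01 (m k : nat) : (k < 2 ^ m)%N ->
  (open_dyadic_itv m k `<=` [set` `[0, 1]%R])%classic.
Proof.
move=> km t; rewrite /open_dyadic_itv /= !in_itv /= => /andP[kt tk].
have m2 : (0 : R) < 2 ^+ m by rewrite exprn_gt0.
rewrite (ltW (le_lt_trans _ kt)) ?divr_ge0 //=.
by rewrite (ltW (lt_le_trans tk _)) // ler_pdivrMr // mul1r -natrX ler_nat.
Qed.

Lemma lebesgue_measure_open_dyadic_itv (m k : nat) :
  lebesgue_measure (open_dyadic_itv m k) = ((2 ^+ m)^-1)%:E.
Proof.
have m2 : (0 : R) < (2 ^+ m)^-1 by rewrite invr_gt0 exprn_gt0.
rewrite lebesgue_measure_itv /= lte_fin ltr_pM2r // ltr_nat ltnSn -EFinD.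
by rewrite -mulrBl -natrB // subSnn mul1r.
Qed.

Lemma sum_sign_halves (a : nat) :
  \sum_(0 <= r < 2 ^ a.+1) ((-1) ^+ (r %/ 2 ^ a) : R) = 0.
Proof.
rewrite expnS mul2n -addnn (@big_cat_nat _ _ _ (2 ^ a)) ?leq_addr //=.
rewrite (eq_big_nat _ _ (F2 := fun=> 1)); last first.
  by move=> r /andP[_ ra]; rewrite divn_small.
rewrite [X in _ + X](eq_big_nat _ _ (F2 := fun=> -1)); last first.
  move=> r /andP[ar ra]; rewrite -(subnK ar) addnC -{1}[(2 ^ a)%N]mul1n.
  rewrite divnMDl ?expn_gt0 //.
  by rewrite divn_small // ltn_subLR.
by rewrite !sumr_const_nat addnK subn0 -mulrnDl addrN mul0rn.
Qed.

Lemma sum_sign_bits_mul (m a b : nat) : (a < b < m)%N ->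
  \sum_(k < 2 ^ m) ((-1) ^+ (k %/ 2 ^ a) * (-1) ^+ (k %/ 2 ^ b) : R) = 0.
Proof.
move=> /andP[ab bm].
have -> : (2 ^ m = 2 ^ (m - a.+1) * 2 ^ a.+1)%N.
  by rewrite -expnD subnK // (ltn_trans ab bm).
rewrite -(big_mkord xpredT (fun k => (-1) ^+ (k %/ 2 ^ a) * (-1) ^+ (k %/ 2 ^ b))).
rewrite big_nat_mul big1 // => q _.
rewrite mulSn -{1}[(q * _)%N]add0n big_addn addnK.
have eb r : (r < 2 ^ a.+1)%N ->
    ((r + q * 2 ^ a.+1) %/ 2 ^ b = q %/ 2 ^ (b - a.+1))%N.
  move=> ra; rewrite -{1}(subnKC ab) expnD divnMA addnC divnMDl ?expn_gt0 //.
  by rewrite (divn_small ra) addn0.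
have ea r : ((-1) ^+ ((r + q * 2 ^ a.+1) %/ 2 ^ a) : R) = (-1) ^+ (r %/ 2 ^ a).
  by rewrite expnS mulnA addnC divnMDl ?expn_gt0 // exprD exprM sqrr_sign mul1r.
rewrite (eq_big_nat _ _
  (F2 := fun r => (-1) ^+ (r %/ 2 ^ a) * (-1) ^+ (q %/ 2 ^ (b - a.+1)))); last first.
  by move=> r /andP[_ ra]; rewrite ea eb.
by rewrite -mulr_suml sum_sign_halves mul0r.
Qed.

Lemma sum_rad_sign_mul (m : nat) (i j : 'I_m) :
  \sum_(k < 2 ^ m) rad_sign m k i * rad_sign m k j = if i == j then (2 ^ m)%:R else 0.
Proof.
rewrite /rad_sign; have [<-|ij] := eqVneq i j.
  under eq_bigr do rewrite -expr2 sqrr_sign.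
  by rewrite sumr_const card_ord.
have im : (m - i.+1 < m)%N by rewrite ltn_subrL (leq_ltn_trans _ (ltn_ord i)).
have jm : (m - j.+1 < m)%N by rewrite ltn_subrL (leq_ltn_trans _ (ltn_ord j)).
have [lt_ij|lt_ji|eq_ij] := ltngtP (m - i.+1) (m - j.+1).
- by rewrite sum_sign_bits_mul // lt_ij.
- by under eq_bigr do rewrite mulrC; rewrite sum_sign_bits_mul // lt_ji.
- case/eqP: ij; apply: val_inj; apply: succn_inj.
  by rewrite -(subKn (ltn_ord i)) eq_ij subKn.
Qed.

End rademacher_dyadic.

Section rademacher_integral.
Context {R : realType}.
Local Open Scope ereal_scope.

(* The integral of a nonnegative function is a supremum over the simple functions
   below it, hence monotone without any measurability assumption; this matters
   since integrands built from [dual_norm] are not known to be measurable. *)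
Lemma ge0_le_integral_nonmeas d (T : measurableType d)
    (mu : {measure set T -> \bar R}) (D : set T) (f g : T -> \bar R) :
  (forall x, D x -> 0 <= f x) -> (forall x, D x -> f x <= g x) ->
  \int[mu]_(x in D) f x <= \int[mu]_(x in D) g x.
Proof.
move=> f0 fg.
have g0 x : D x -> 0 <= g x by move=> Dx; exact: le_trans (f0 _ Dx) (fg _ Dx).
rewrite !ge0_integralE //; apply: ereal_sup_le => _ [h hf <-]; exists h => //= x.
apply: le_trans (hf x) _; rewrite /patch; case: ifP => // /set_mem; exact: fg.
Qed.

Lemma avg_rad_sign_le_integral (m : nat) (Phi : ('I_m -> R) -> \bar R) :
  (forall v, 0 <= Phi v) ->
  \sum_(k < 2 ^ m) ((2 ^+ m)^-1)%:E * Phi (rad_sign m k) <=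
  \int[lebesgue_measure]_(t in `[0%R, 1%R]) Phi (fun i => rademacher i.+1 t).
Proof.
move=> Phi0.
pose step (t : R) :=
  \sum_(k < 2 ^ m) Phi (rad_sign m k) * (\1_(open_dyadic_itv m k) t)%:E.
have step_ge0 k (t : R) : 0 <= Phi (rad_sign m k) * (\1_(open_dyadic_itv m k) t)%:E.
  by rewrite mule_ge0 // lee_fin indicE ler0n.
have int_step : \int[lebesgue_measure]_(t in `[0%R, 1%R]) step t =
    \sum_(k < 2 ^ m) ((2 ^+ m)^-1)%:E * Phi (rad_sign m k).
  rewrite ge0_integral_sum //; last first.
    move=> k; apply: measurable_funeM; apply/measurable_EFinP.
    by apply: measurable_indic; exact: measurable_itv.
  apply: eq_bigr => k _; rewrite ge0_integralZl //; last first.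
    by apply/measurable_EFinP; apply: measurable_indic; exact: measurable_itv.
  rewrite integral_indic ?setIidl.
  - by rewrite muleC; congr (_ * _); exact: lebesgue_measure_open_dyadic_itv.
  - exact: open_dyadic_itv_sub01 (ltn_ord k).
  - exact: measurable_itv.
  - exact: measurable_itv.
rewrite -int_step; apply: ge0_le_integral_nonmeas => t _.
  by rewrite sume_ge0.
have [[k kt]|nk] := pselect (exists k : 'I_(2 ^ m), open_dyadic_itv m k t); last first.
  rewrite /step big1 // => k _; rewrite indicE memNset ?mule0 // => kt.
  by apply: nk; exists k.
rewrite /step (bigD1 k) //= big1 ?adde0; last first.
  move=> j jk; rewrite indicE memNset ?mule0 // => jt.
  by move/negP: jk; apply; apply/eqP/val_inj; exact: open_dyadic_itv_inj jt kt.
rewrite indicE mem_set // mule1 le_eqVlt; apply/orP; left; apply/eqP.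
by congr Phi; apply: funext => i; exact/esym/rademacher_open_dyadic.
Qed.

End rademacher_integral.

Section linear_functionals.
Context {R : realType} {E : normedModType R}.
Implicit Types (f : E -> R) (x : E).

Lemma linfun0 f : is_linfun f -> f 0 = 0.
Proof.
move=> lin_f; have := lin_f 1 0 0; rewrite scale1r addr0 mul1r => f00.
by apply: (addrI (f 0)); rewrite addr0 -f00.
Qed.

Lemma linfunZ f c x : is_linfun f -> f (c *: x) = c * f x.
Proof. by move=> lin_f; have := lin_f c x 0; rewrite (linfun0 _ lin_f) !addr0. Qed.

Lemma linfunD f x y : is_linfun f -> f (x + y) = f x + f y.
Proof. by move=> lin_f; have := lin_f 1 x y; rewrite scale1r mul1r. Qed.

Lemma linfun_sum f (m : nat) (c : 'I_m -> R) (x : 'I_m -> E) : is_linfun f ->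
  f (\sum_(i < m) c i *: x i) = \sum_(i < m) c i * f (x i).
Proof.
move=> lin_f; apply: (big_ind2 (fun a b => f a = b)).
- exact: linfun0.
- by move=> ? ? ? ? <- <-; rewrite linfunD.
- by move=> i _; rewrite linfunZ.
Qed.

Lemma is_linfun_comb (m : nat) (c : 'I_m -> R) (f : nat -> E -> R) :
  (forall i, is_linfun (f i)) ->
  is_linfun (fun x => \sum_(i < m) c i * f i x).
Proof.
move=> lin_f a x y; rewrite mulr_sumr -big_split; apply: eq_bigr => i _ /=.
by rewrite lin_f mulrDr mulrCA.
Qed.

Lemma dual_elem0 : dual_elem (fun _ : E => 0 : R).
Proof. by split=> [a x y|x]; [rewrite mulr0 addr0 | exact: cst_continuous]. Qed.

Lemma dual_elemZ f c : dual_elem f -> dual_elem (fun x => c * f x).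
Proof.
move=> [lin_f cont_f]; split=> [a x y|x]; first by rewrite lin_f mulrDr mulrCA.
by apply: (@continuousM _ _ (fun=> c) f x); [exact: cst_continuous | exact: cont_f].
Qed.

Lemma bidual_ballZ (phi : (E -> R) -> R) f c :
  bidual_ball phi -> dual_elem f -> phi (fun x => c * f x) = c * phi f.
Proof.
move=> [lin_phi _] df.
have phi0 : phi (fun _ => 0) = 0.
  have := lin_phi 1 _ _ dual_elem0 dual_elem0.
  have -> : (fun _ : E => 1 * 0 + 0) = (fun _ => 0 : R).
    by apply: funext => x; rewrite mulr0 addr0.
  by rewrite mul1r => phi00; apply: (addrI (phi (fun _ => 0))); rewrite addr0 -phi00.
have := lin_phi c _ _ df dual_elem0; rewrite phi0 addr0.
have -> // : (fun x => c * f x + 0) = (fun x => c * f x).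
by apply: funext => x; rewrite addr0.
Qed.

Local Open Scope ereal_scope.

Lemma dual_norm_ge0 f : 0 <= dual_norm f.
Proof.
apply: le_trans (_ : (`|f 0|)%:E <= _); first by rewrite lee_fin.
by apply: ereal_sup_ubound; exists 0%R => //=; rewrite normr0.
Qed.

Lemma linfun_le_dual_norm f x : is_linfun f ->
  (`|f x|)%:E <= dual_norm f * (`|x|)%:E.
Proof.
move=> lin_f; have [->|x0] := eqVneq x 0%R; first by rewrite linfun0 // !normr0 mule0.
have nx : (0 < `|x|)%R by rewrite normr_gt0.
have unit_x : (`|f (`|x|^-1 *: x)|)%:E <= dual_norm f.
  apply: ereal_sup_ubound; exists (`|x|^-1 *: x) => //=.
  by rewrite normrZ ger0_norm ?invr_ge0 ?(ltW nx) // mulVf // gt_eqF.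
apply: le_trans (lee_wpmul2r _ unit_x); last by rewrite lee_fin.
rewrite -EFinM linfunZ // normrM ger0_norm ?invr_ge0 ?(ltW nx) //.
by rewrite mulrC mulrA mulfV ?gt_eqF // mul1r.
Qed.

End linear_functionals.

Section powers.
Context {R : realType}.

Lemma powR_le1 (x r : R) : 0 <= x -> 0 < r -> (x `^ r <= 1) = (x <= 1).
Proof.
move=> x0 r0; apply/idP/idP => [|x1].
  apply: contraTT; rewrite -!ltNge => x1.
  by have := @gt0_ltr_powR R r r0 1 x; rewrite powR1 !nnegrE; apply.
by have := @ge0_ler_powR R r (ltW r0) x 1; rewrite powR1 !nnegrE; apply.
Qed.

Lemma expr2_le_powR (y s : R) : 0 <= y <= 1 -> s <= 2 -> y ^+ 2 <= y `^ s.
Proof.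
move=> /andP[y0 y1] s2; have [->|y_neq0] := eqVneq y 0.
  by rewrite expr0n powR_ge0.
by rewrite -powR_mulrn // ger_powR // lt_def y_neq0 y0 y1.
Qed.

Lemma conj_exp_gt0_le2 (q : R) : 2 <= q -> 0 < conj_exp q <= 2.
Proof.
move=> q2; have q1 : 0 < q - 1 by lra.
by apply/andP; split; rewrite /conj_exp ?divr_gt0 ?ler_pdivrMr //; lra.
Qed.

Local Open Scope ereal_scope.

Lemma poweR_le1 (x : \bar R) (r : R) : 0 <= x -> (0 < r)%R ->
  (x `^ r <= 1) = (x <= 1).
Proof.
case: x => [x| |] // x0 r0; last by rewrite poweRyr ?gt_eqF.
by rewrite poweR_EFin !lee_fin powR_le1.
Qed.

Lemma poweR12_le_sqr (x : \bar R) (c : R) : 0 <= x -> (0 <= c)%R ->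
  x `^ 2^-1 <= c%:E -> x <= (c ^+ 2)%:E.
Proof.
case: x => [x| |] // x0 c0; last by rewrite poweRyr // invr_neq0.
rewrite lee_fin in x0.
rewrite poweR_EFin !lee_fin powR12_sqrt // => sqrt_x_le.
by rewrite -(sqr_sqrtr x0) lerXn2r // ?nnegrE ?sqrtr_ge0.
Qed.

Lemma ge0_mule_le_sqrD (x : \bar R) (b : R) : 0 <= x -> (0 <= b)%R ->
  x * b%:E <= x ^+ 2 + (b ^+ 2)%:E.
Proof.
case: x => [x| |] // x0 b0; last by rewrite expe2 mulyy addye // leey.
rewrite lee_fin in x0.
by rewrite -EFin_expe -EFinM -EFinD lee_fin; nra.
Qed.

End powers.

Section weak_norms.
Context {R : realType} {E : normedModType R}.
Local Open Scope ereal_scope.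

Lemma bidual_sum_powR_le1 (s : R) (g : nat -> E -> R) (phi : (E -> R) -> R)
    (m : nat) : (0 < s)%R -> bidual_ball phi -> wnorm_dual s g <= 1 ->
  (\sum_(i < m) `|phi (g i)| `^ s <= 1)%R.
Proof.
move=> s0 phiB gw.
have series_le1 : \sum_(i <oo) (`|phi (g i)| `^ s)%:E <= 1.
  rewrite -(@poweR_le1 _ _ s^-1%R) ?invr_gt0 //.
    by apply: le_trans gw; apply: ereal_sup_ubound; exists phi.
  by apply: nneseries_ge0 => i _ _; rewrite lee_fin powR_ge0.
have := le_trans (nneseries_lim_ge m _) series_le1.
by rewrite sumEFin lee_fin big_mkord; apply=> i _ _; rewrite lee_fin powR_ge0.
Qed.

Lemma wnorm2_dual_fin_le1 (s : R) (m : nat) (g : nat -> E -> R) (c : nat -> R) :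
  (0 < s <= 2)%R -> (forall i, dual_elem (g i)) -> (forall i, `|c i| <= 1)%R ->
  wnorm_dual s g <= 1 -> wnorm2_dual_fin m (fun i x => c i * g i x)%R <= 1.
Proof.
move=> /andP[s0 s2] dual_g c1 gw; apply: ge_ereal_sup => _ [phi phiB <-].
have phi_sum := bidual_sum_powR_le1 s g phi m s0 phiB gw.
have phi_le1 (i : 'I_m) : (`|phi (g i)| <= 1)%R.
  rewrite -(@powR_le1 _ _ s) //; apply: le_trans phi_sum.
  by rewrite (bigD1 i) //= lerDl sumr_ge0 // => j _; exact: powR_ge0.
rewrite sumEFin poweR_EFin lee_fin powR_le1 ?invr_gt0 ?sumr_ge0 //.
apply: le_trans phi_sum; apply: ler_sum => i _.
rewrite bidual_ballZ // normrM exprMn; apply: (@le_trans _ _ (`|phi (g i)| ^+ 2)%R).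
  by rewrite ler_piMl ?sqr_ge0 // exprn_ile1.
by rewrite expr2_le_powR // normr_ge0 phi_le1.
Qed.

End weak_norms.

Section rademacher_average.
Context {R : realType} {E : normedModType R}.

Lemma sum_rad_sign_pairing (m : nat) (f : nat -> E -> R) (x : nat -> E) :
  (forall i, is_linfun (f i)) ->
  \sum_(k < 2 ^ m) \sum_(i < m)
     rad_sign m k i * f i (\sum_(j < m) rad_sign m k j *: x j)
  = (2 ^ m)%:R * \sum_(i < m) f i (x i).
Proof.
move=> lin_f.
transitivity (\sum_(i < m) \sum_(j < m)
    (\sum_(k < 2 ^ m) rad_sign m k i * rad_sign m k j) * f i (x j)).
  rewrite exchange_big; apply: eq_bigr => i _ /=.
  under eq_bigr do rewrite (linfun_sum _ _ _ _ (lin_f i)) mulr_sumr.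
  rewrite exchange_big; apply: eq_bigr => j _ /=; rewrite mulr_suml.
  by apply: eq_bigr => k _; rewrite mulrA.
rewrite mulr_sumr; apply: eq_bigr => i _.
rewrite (bigD1 i) //= [X in _ + X]big1 => [|j ji].
  by rewrite sum_rad_sign_mul eqxx addr0.
by rewrite sum_rad_sign_mul eq_sym (negbTE ji) mul0r.
Qed.

Lemma sum_linfun_le_avg_sqr (m : nat) (f : nat -> E -> R) (x : nat -> E) :
  (forall i, is_linfun (f i)) ->
  ((\sum_(i < m) f i (x i))%:E <=
   \sum_(k < 2 ^ m) ((2 ^+ m)^-1)%:E *
     (dual_norm (fun z => (\sum_(i < m) rad_sign m k i * f i z)%R) ^+ 2
      + (`|\sum_(j < m) rad_sign m k j *: x j| ^+ 2)%:E))%E.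
Proof.
move=> lin_f.
have m2 : (2 ^+ m : R) != 0 by rewrite expf_neq0 // pnatr_eq0.
rewrite -[\sum_(i < m) _](mulKf m2) -natrX -(sum_rad_sign_pairing m f x lin_f).
rewrite natrX mulr_sumr -sumEFin; apply: lee_sum => k _; rewrite EFinM.
apply: lee_wpmul2l; first by rewrite lee_fin invr_ge0 exprn_ge0.
rewrite (le_trans _ (ge0_mule_le_sqrD _ _ (dual_norm_ge0 _) (normr_ge0 _))) //.
rewrite (le_trans _ (linfun_le_dual_norm _ _ (is_linfun_comb _ _ _ lin_f))) //=.
by rewrite lee_fin ler_norm.
Qed.

End rademacher_average.

Theorem corollary2p2 (R : realType) (X Y : completeNormedModType R)
    (u : {linear X -> Y}) :
  continuous u ->
  adjoint_almost_summing u ->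
  forall q : R, 2 <= q ->
  forall xs : nat -> X, in_Rad xs -> in_ell_angle q (fun i => u (xs i)).
Proof.
move=> _ [C [C0 almost_summing]] q q2 xs [M rad_bound].
apply: (@le_lt_trans _ _ (C ^+ 2 + M)%:E); last exact: ltey.
apply: ge_ereal_sup => _ [g [dual_g wnorm_g] <-].
apply: lime_le; first by apply: is_cvg_nneseries => n _ _; rewrite lee_fin.
apply: nearW => m; rewrite big_mkord.
pose ys i y := Num.sg (g i (u (xs i))) * g i y.
have dual_ys i : dual_elem (ys i) by exact: dual_elemZ.
have -> : (\sum_(i < m) (`|g i (u (xs i))|)%:E = (\sum_(i < m) ys i (u (xs i)))%:E)%E.
  by rewrite sumEFin; congr _%:E; apply: eq_bigr => i _; rewrite normrEsg.
apply: le_trans (sum_linfun_le_avg_sqr m (fun i x => ys i (u x)) xs _) _.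
  by move=> i a x y; rewrite linearP; case: (dual_ys i) => -> _.
under eq_bigr do rewrite ge0_muleDr ?sqre_ge0 ?lee_fin ?sqr_ge0 //.
rewrite big_split /= EFinD; apply: leeD.
- have /= avg_le := avg_rad_sign_le_integral m
    (fun v => dual_norm (fun x => (\sum_(i < m) v i * ys i (u x))%R) ^+ 2)%E
    (fun v => sqre_ge0 _).
  apply: (le_trans avg_le).
  apply: poweR12_le_sqr => //; first by apply: integral_ge0 => t _; exact: sqre_ge0.
  apply: le_trans (almost_summing m ys (fun i _ => dual_ys i)) _.
  rewrite -[leRHS]mule1 lee_wpmul2l ?lee_fin //.
  apply: (@wnorm2_dual_fin_le1 _ _ (conj_exp q)) => // [|i].
    exact: conj_exp_gt0_le2.
  by rewrite normr_sg lern1 leq_b1.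
- have /= avg_le := avg_rad_sign_le_integral m
    (fun v => (`|\sum_(j < m) v j *: xs j| ^+ 2)%:E) (fun v => sqr_ge0 _).
  exact: le_trans avg_le (rad_bound m).
Qed.
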